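(* Consider the Boosting SDP for input matrix $\hat A\in\mathbb R^{n\times n}$, labels $\ell\in\{-1,1\}^n$ with $L=\ell\ell^T$, and parameters $0<\zeta<1$, $d>0$, $K\ge10^4$. Suppose there are an $n\times n$ matrix $F$ and a subset $S\subseteq[n]$ with $|S|\ge(1-\theta)n$, where $\theta\le\zeta$, such that: (i) $(F\odot L)_{S\times S}$ is entrywise nonnegative; (ii) $(\hat A-F)_{S\times S}=Y+Z$ with $\|Y\|_{\mathrm{op}}\le Kd$ and $|Z_{ij}|\le Kd/(\zeta n)$ for all $i,j$; (iii) $((\hat A-F)\odot L)_{S\times S}$ is $(10dK^3,\theta dK)$-resolvable. Then setting $\rho=\theta$, $w_i=1$ for $i\notin S$ and $w_i=0$ for $i\in S$, $N$ the indicator matrix of $([n]\setminus S)\times([n]\setminus S)$, and $W$ the indicator matrix of $S\times S$ gives a feasible solution of the Boosting SDP with objective value $\rho=\theta$.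
   Context: Notation: $J$ all-ones matrix, $\mathbf 1$ all-ones vector, $\odot$ entrywise product, $\langle X,Y\rangle=\sum_{ij}X_{ij}Y_{ij}$, $\|\cdot\|_1$ trace norm, $\|\cdot\|_{\mathrm{op}}$ operator norm, $M_{S\times T}$ submatrix indexed by $S\times T$. Resolvability: an $m\times m$ matrix $X$ is $(d_1,d_2)$-resolvable if for all $x_1,\dots,x_m\in[0,1]$ with $\sum_ix_i\le10^{-6}m$, $\langle X,Y_x\rangle\ge d_1\sum_ix_i-d_2m$, where $(Y_x)_{ij}=x_i$. Pseudorectangles: $\mathcal R_n(\theta)$ is the set of $n\times n$ matrices $M$ with $0\le M_{ij}\le1$, $\sum_{ij}|M_{ij}|\le\theta^2n^2$, $\|M\|_1\le\theta n$. Approximate row selectors: $(M,x_1,\dots,x_n)\in\mathcal S_n(\theta,\delta)$ if $0\le M_{ij}\le1$, $0\le x_i\le1$, $\sum_ix_i\le\theta n$, and $M=Y_x-N$ for some $N\in\mathcal R_n(\sqrt{\theta\delta})$. Boosting SDP (inputs $\hat A,\ell$, parameters $\zeta,d,K$ with $0<\zeta<1$, $K\ge10^4$): variables $\rho\in[0,\zeta]$, $w\in\mathbb R^n$, $W\in\mathbb R^{n\times n}$, $N\in\mathcal R_n(\rho)$ with $0\le w_i\le1$, $\sum_iw_i\le\rho n$, $W_{ij}\ge0$, $W_{ij}=1-w_i-w_j+N_{ij}$ for all $i,j$, and for every $\rho'$ with $\rho/K\le\rho'\le\zeta$ and every $(M,x)\in\mathcal S_n(\rho',K\rho')$: $\langle\hat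 A\odot L\odot W,M\rangle\ge10dK^2\big(K\sum_ix_i(1-w_i)-\rho'n\big)$, where $L=\ell\ell^T$. Objective: minimize $\rho$. *)

From HB Require Import structures.
From mathcomp Require Import all_boot all_order all_algebra.
Set Implicit Arguments. Unset Strict Implicit. Unset Printing Implicit Defensive.
Import Order.TTheory GRing.Theory Num.Theory.
Local Open Scope ring_scope.

Section Defs.
Variable R : rcfType.

Definition frob {m : nat} (X Y : 'M[R]_m) : R := \sum_i \sum_j X i j * Y i j.

Definition Yx {m : nat} (x : 'I_m -> R) : 'M[R]_m := \matrix_(i, j) x i.

Definition hadamard {m : nat} (X Y : 'M[R]_m) : 'M[R]_m := \matrix_(i, j) (X i j * Y i j).

Definition outer {m : nat} (l : 'I_m -> R) : 'M[R]_m := \matrix_(i, j) (l i * l j).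

(* submatrix M_{S x S}, indexed by 'I_#|S| via the enumeration of S *)
Definition subSxS {n : nat} (S : {set 'I_n}) (M : 'M[R]_n) : 'M[R]_#|S| :=
  \matrix_(i, j) M (enum_val i) (enum_val j).

Definition opnorm_le {m : nat} (M : 'M[R]_m) (c : R) : Prop :=
  0 <= c /\ forall v : 'cV[R]_m,
    Num.sqrt (\sum_i (M *m v) i 0 ^+ 2) <= c * Num.sqrt (\sum_i v i 0 ^+ 2).

(* ||M||_1 <= c : trace norm (sum of singular values), via a singular value
   decomposition M = U diag(sigma) V^T (singular values are unique). *)
Definition orthogonal {m : nat} (U : 'M[R]_m) : Prop := U^T *m U = 1%:M.
Definition tracenorm_le {m : nat} (M : 'M[R]_m) (c : R) : Prop :=
  exists (U V : 'M[R]_m) (sigma : 'rV[R]_m),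
    [/\ orthogonal U, orthogonal V, (forall i, 0 <= sigma 0 i),
        M = U *m diag_mx sigma *m V^T & \sum_i sigma 0 i <= c].

Definition resolvable {m : nat} (X : 'M[R]_m) (d1 d2 : R) : Prop :=
  forall x : 'I_m -> R, (forall i, 0 <= x i <= 1) ->
    \sum_i x i <= 10^-1 ^+ 6 * m%:R ->
    frob X (Yx x) >= d1 * (\sum_i x i) - d2 * m%:R.

Definition pseudorect {n : nat} (theta : R) (M : 'M[R]_n) : Prop :=
  [/\ (forall i j, 0 <= M i j <= 1),
      \sum_i \sum_j `|M i j| <= theta ^+ 2 * n%:R ^+ 2
    & tracenorm_le M (theta * n%:R)].

Definition rowsel {n : nat} (theta delta : R) (M : 'M[R]_n) (x : 'I_n -> R) : Prop :=
  [/\ (forall i j, 0 <= M i j <= 1), (forall i, 0 <= x i <= 1),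
      \sum_i x i <= theta * n%:R
    & exists N : 'M[R]_n, pseudorect (Num.sqrt (theta * delta)) N /\ M = Yx x - N].

Definition boosting_feasible {n : nat} (Ahat : 'M[R]_n) (ell : 'I_n -> R)
    (zeta d K : R) (rho : R) (w : 'I_n -> R) (W N : 'M[R]_n) : Prop :=
  0 <= rho <= zeta /\ pseudorect rho N /\
  (forall i, 0 <= w i <= 1) /\ \sum_i w i <= rho * n%:R /\
  (forall i j, 0 <= W i j) /\
  (forall i j, W i j = 1 - w i - w j + N i j) /\
  (forall (rho' : R), rho / K <= rho' <= zeta ->
      forall (M : 'M[R]_n) (x : 'I_n -> R), rowsel rho' (K * rho') M x ->
        frob (hadamard (hadamard Ahat (outer ell)) W) M >=
          10%:R * d * K ^+ 2 * (K * (\sum_i x i * (1 - w i)) - rho' * n%:R)).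

End Defs.

(* On S x S the Hadamard product with L splits as F o L + G, with G := (Ahat - F) o L
   restricted to S x S.  For a row selector M = Y_x - N the F-part contributes a nonnegative
   amount, <G, Y_x> is bounded below by resolvability, and <G, N> is at most
   ||Y||_op ||N||_1 + max |Z| sum N, which the pseudorectangle bounds make O(K^2 d rho n).
   Resolvability needs sum x <= 10^-6 |S|; testing it against the constant vector 10^-6
   shows zeta n <= 10^-6 |S|, which suffices.  The remaining constraints are bookkeeping,
   except the trace norm of the indicator of S^c x S^c: it is the rank-one matrix u u^T,
   whose singular value decomposition is obtained from a Householder reflection. *)

From Pilot Require Import Defs.
From HB Require Import structures.
From mathcomp Require Import all_boot all_order all_algebra.
From mathcomp Require Import ring lra.
Set Implicit Arguments. Unset Strict Implicit. Unset Printing Implicit Defensive.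
Import Order.TTheory GRing.Theory Num.Theory.
Local Open Scope ring_scope.

Section Frobenius.
Variables (R : rcfType) (m : nat).
Implicit Types (X Y : 'M[R]_m).

Lemma frobDl X1 X2 Y : frob (X1 + X2) Y = frob X1 Y + frob X2 Y.
Proof.
rewrite /frob -big_split; apply: eq_bigr => i _.
by rewrite -big_split; apply: eq_bigr => j _; rewrite mxE mulrDl.
Qed.

Lemma frobBr X Y1 Y2 : frob X (Y1 - Y2) = frob X Y1 - frob X Y2.
Proof.
rewrite /frob -sumrB; apply: eq_bigr => i _.
by rewrite -sumrB; apply: eq_bigr => j _; rewrite !mxE mulrBr.
Qed.

Lemma frob_ge0 X Y : (forall i j, 0 <= X i j) -> (forall i j, 0 <= Y i j) ->
  0 <= frob X Y.
Proof.
by move=> X0 Y0; do 2!(apply: sumr_ge0 => ? _); apply: mulr_ge0.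
Qed.

Lemma frob_Yx X (x : 'I_m -> R) : frob X (Yx x) = \sum_i \sum_j X i j * x i.
Proof. by apply: eq_bigr => i _; apply: eq_bigr => j _; rewrite mxE. Qed.

End Frobenius.

Section Sums.
Variable R : rcfType.

Lemma sum_mul_le_sqr (m : nat) (c : R) (u w : 'I_m -> R) : 0 < c ->
  \sum_a u a * w a <= (c * \sum_a u a ^+ 2 + (\sum_a w a ^+ 2) / c) / 2.
Proof.
move=> c0; rewrite mulr_sumr mulr_suml -big_split /= mulr_suml.
apply: ler_sum => a _.
have gap : (c * u a ^+ 2 + w a ^+ 2 / c) / 2 - u a * w a = (c * u a - w a) ^+ 2 / c / 2.
  by field; rewrite gt_eqF.
by rewrite -subr_ge0 gap !divr_ge0 ?sqr_ge0 ?ltW.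
Qed.

Lemma opnorm_bilinear_le (m : nat) (Y : 'M[R]_m) (c : R) (u v : 'I_m -> R) :
  0 < c -> opnorm_le Y c ->
  \sum_a u a * (\sum_b Y a b * v b) <= c * (\sum_a u a ^+ 2 + \sum_a v a ^+ 2) / 2.
Proof.
move=> c0 [_ /(_ (\col_b v b))].
pose w a := (Y *m \col_b v b) a 0.
have -> : \sum_i (\col_b v b) i 0 ^+ 2 = \sum_i v i ^+ 2.
  by apply: eq_bigr => i _; rewrite mxE.
rewrite -/w => hw.
have -> : \sum_a u a * (\sum_b Y a b * v b) = \sum_a u a * w a.
  by apply: eq_bigr => a _; rewrite /w mxE; congr (_ * _); apply: eq_bigr => b _; rewrite mxE.
have v0 : 0 <= \sum_i v i ^+ 2 by apply: sumr_ge0 => i _; apply: sqr_ge0.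
have w0 : 0 <= \sum_i w i ^+ 2 by apply: sumr_ge0 => i _; apply: sqr_ge0.
have wv : \sum_i w i ^+ 2 <= c ^+ 2 * \sum_i v i ^+ 2.
  rewrite -(sqr_sqrtr v0) -(sqr_sqrtr w0) -exprMn.
  by rewrite ler_sqr // nnegrE ?mulr_ge0 ?sqrtr_ge0 ?ltW.
apply: le_trans (sum_mul_le_sqr u w c0) _.
have : (\sum_a w a ^+ 2) / c <= c * \sum_i v i ^+ 2 by rewrite ler_pdivrMr //; nra.
nra.
Qed.

Lemma orthogonal_col_sqr_sum (n : nat) (U : 'M[R]_n) (k : 'I_n) :
  Defs.orthogonal U -> \sum_i U i k ^+ 2 = 1.
Proof.
move=> /(congr1 (fun A : 'M[R]_n => A k k)); rewrite !mxE eqxx mulr1n => <-.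
by apply: eq_bigr => i _; rewrite mxE expr2.
Qed.

Lemma sum_enum_val_le (n : nat) (A : {set 'I_n}) (f : 'I_n -> R) :
  (forall i, 0 <= f i) -> \sum_(a < #|A|) f (enum_val a) <= \sum_i f i.
Proof.
move=> f0; rewrite -big_enum_val /= [X in _ <= X](bigID (mem A)) /=.
by rewrite lerDl sumr_ge0.
Qed.

End Sums.

Section TraceNorm.
Variables (R : rcfType) (n : nat).
Implicit Types (u v e q : 'cV[R]_n).

Lemma dot_self_eq0 v : ((v^T *m v) 0 0 == 0) = (v == 0).
Proof.
apply/eqP/eqP => [|->]; last by rewrite mulmx0 mxE.
rewrite mxE => /eqP; rewrite psumr_eq0 => [/allP v0|i _]; last first.
  by rewrite mxE -expr2 sqr_ge0.
apply/matrixP => i j; rewrite (ord1 j) !mxE.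
by move: (v0 i (mem_index_enum i)); rewrite mxE -expr2 sqrf_eq0 => /eqP.
Qed.

(* Reflection through the hyperplane orthogonal to [v]; since [2 / 0 = 0] it is the identity
   for [v = 0]. *)
Definition householder v : 'M[R]_n := 1%:M - (2 / (v^T *m v) 0 0) *: (v *m v^T).

Lemma householder_orthogonal v : Defs.orthogonal (householder v).
Proof.
set beta := (v^T *m v) 0 0; set a := 2 / beta.
have HT : (householder v)^T = householder v.
  by rewrite /householder linearB /= trmx1 linearZ /= trmx_mul trmxK.
have vv : v *m v^T *m (v *m v^T) = beta *: (v *m v^T).
  by rewrite mulmxA -(mulmxA v) [v^T *m v]mx11_scalar mul_mx_scalar -scalemxAl.
have aab : a * a * beta = a + a.
  rewrite /a; have [->|b0] := eqVneq beta 0; first by rewrite invr0 !mulr0 addr0.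
  by field.
rewrite /Defs.orthogonal HT /householder -/beta -/a mulmxBl mul1mx mulmxBr mulmx1.
rewrite -scalemxAl -scalemxAr vv !scalerA aab scalerDl.
by rewrite opprB addrK subrK.
Qed.

Lemma householder_swap e q : e^T *m e = q^T *m q -> householder (e - q) *m e = q.
Proof.
move=> eq_norm; set v := e - q.
have [v0|v_neq0] := eqVneq v 0.
  rewrite v0 /householder trmx0 !mul0mx scaler0 subr0 mul1mx.
  by apply/eqP; rewrite -subr_eq0 -/v v0.
have qe_eq : (q^T *m e) 0 0 = (e^T *m q) 0 0.
  by rewrite !mxE; apply: eq_bigr => i _; rewrite !mxE mulrC.
have vv : (v^T *m v) 0 0 = 2 * (v^T *m e) 0 0.
  rewrite /v mulmxBr !linearB /= !mulmxBl -eq_norm.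
  by move: qe_eq; rewrite !mxE => ->; ring.
have ve0 : (v^T *m e) 0 0 != 0.
  by apply: contra v_neq0 => /eqP ve0; rewrite -dot_self_eq0 vv ve0 mulr0.
rewrite /householder -/v mulmxBl mul1mx -scalemxAl -mulmxA [v^T *m e]mx11_scalar.
rewrite mul_mx_scalar scalerA vv.
have -> : 2 / (2 * (v^T *m e) 0 0) * (v^T *m e) 0 0 = 1 by field.
by rewrite scale1r /v opprB addrC subrK.
Qed.

Lemma tracenorm_scaled_proj q (c : R) (k : 'I_n) :
  0 <= c -> q^T *m q = 1%:M -> tracenorm_le (c *: (q *m q^T)) c.
Proof.
move=> c0 q_unit; set e : 'cV[R]_n := delta_mx k 0.
have e_unit : e^T *m e = q^T *m q.
  rewrite q_unit /e trmx_delta mul_delta_mx.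
  by apply/matrixP => i j; rewrite !ord1 !mxE.
have He := householder_swap e_unit; set H := householder (e - q) in He.
exists H, H, (c *: delta_mx 0 k); split; try exact: householder_orthogonal.
- by move=> i; rewrite !mxE mulr_ge0 ?ler0n.
- have -> : diag_mx (c *: delta_mx 0 k) = c *: (e *m e^T).
    rewrite /e trmx_delta mul_delta_mx; apply/matrixP => i j; rewrite !mxE.
    have [<-|ij] := eqVneq i j; first by rewrite eqxx mulr1n andbb.
    rewrite mulr0n; have [ik|_] := eqVneq i k; last by rewrite mulr0.
    by rewrite -ik eq_sym (negbTE ij) mulr0.
  by rewrite -scalemxAr -scalemxAl mulmxA -(mulmxA (H *m e)) -trmx_mul He.
- by rewrite (bigD1 k) //= big1 => [|i ik]; rewrite !mxE ?eqxx ?(negbTE ik) ?mulr1 ?mulr0 ?addr0.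
Qed.

Lemma tracenorm_outer u : tracenorm_le (u *m u^T) ((u^T *m u) 0 0).
Proof.
have [->|u_neq0] := eqVneq u 0.
  exists 1%:M, 1%:M, 0; split; rewrite /Defs.orthogonal ?trmx1 ?mulmx1 //.
  - by move=> i; rewrite mxE.
  - by rewrite trmx0 mul0mx mul1mx linear0.
  - by rewrite trmx0 mul0mx big1 ?mxE // => i _; rewrite mxE.
have [k [_ _]] := matrix0Pn _ u_neq0.
set beta := (u^T *m u) 0 0; set s := Num.sqrt beta.
have beta_gt0 : 0 < beta.
  rewrite lt_def /beta dot_self_eq0 u_neq0 mxE sumr_ge0 // => i _.
  by rewrite mxE -expr2 sqr_ge0.
have s2 : s ^+ 2 = beta by rewrite sqr_sqrtr ?ltW.
have s_neq0 : s != 0 by rewrite sqrtr_eq0 -ltNge.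
have inv2 : beta / s / s = 1 by rewrite -s2; field.
have -> : u *m u^T = beta *: ((s^-1 *: u) *m (s^-1 *: u)^T).
  by rewrite linearZ /= -scalemxAl -scalemxAr !scalerA inv2 scale1r.
apply: tracenorm_scaled_proj k (ltW beta_gt0) _.
rewrite !linearZ /= -scalemxAl scalerA [u^T *m u]mx11_scalar scale_scalar_mx.
by congr (_%:M); rewrite -inv2 -/beta; ring.
Qed.

Lemma tracenorm_le_trans (M : 'M[R]_n) (a b : R) :
  tracenorm_le M a -> a <= b -> tracenorm_le M b.
Proof.
move=> [U [V [sigma [hU hV sigma0 eqM sum_le]]]] ab.
by exists U, V, sigma; split => //; apply: le_trans ab.
Qed.

End TraceNorm.

Section SubmatrixBounds.
Variables (R : rcfType) (n : nat) (S : {set 'I_n}).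
Local Notation m := #|S|.

Lemma sum_subcol_sqr_le (U : 'M[R]_n) (e : 'I_m -> R) (k : 'I_n) :
  Defs.orthogonal U -> (forall a, `|e a| <= 1) ->
  \sum_a (e a * U (enum_val a) k) ^+ 2 <= 1.
Proof.
move=> hU e1; rewrite -(orthogonal_col_sqr_sum k hU).
apply: le_trans _ (sum_enum_val_le S (fun i => sqr_ge0 (U i k))).
apply: ler_sum => a _; rewrite exprMn ler_piMl ?sqr_ge0 //.
by rewrite -real_normK ?num_real // expr_le1 ?normr_ge0.
Qed.

Lemma subSxS_tracenorm_bilinear_le (Y : 'M[R]_m) (N : 'M[R]_n) (e : 'I_m -> R) (c s : R) :
  0 < c -> opnorm_le Y c -> tracenorm_le N s -> (forall a, `|e a| <= 1) ->
  \sum_a \sum_b Y a b * (e a * e b) * subSxS S N a b <= c * s.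
Proof.
move=> c0 hY [U [V [sigma [hU hV sigma0 -> sigma_le]]]] e1.
pose u k a := e a * U (enum_val a) k; pose v k b := e b * V (enum_val b) k.
have -> : \sum_a \sum_b Y a b * (e a * e b) * subSxS S (U *m diag_mx sigma *m V^T) a b
    = \sum_k sigma 0 k * \sum_a u k a * \sum_b Y a b * v k b.
  under eq_bigr do under eq_bigr do rewrite mxE !mxE mulr_sumr.
  under eq_bigr do rewrite exchange_big /=.
  rewrite exchange_big /=; apply: eq_bigr => k _.
  rewrite mulr_sumr; apply: eq_bigr => a _; rewrite !mulr_sumr; apply: eq_bigr => b _.
  by rewrite mul_mx_diag !mxE /u /v; ring.
apply: le_trans (_ : _ <= \sum_k sigma 0 k * c) _.
  apply: ler_sum => k _; apply: ler_wpM2l => //.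
  apply: le_trans (opnorm_bilinear_le (u k) (v k) c0 hY) _.
  have := sum_subcol_sqr_le k hU e1; have := sum_subcol_sqr_le k hV e1.
  rewrite -/(u k) -/(v k); nra.
by rewrite -mulr_suml mulrC; apply: ler_wpM2l; first exact: ltW.
Qed.

Lemma entry_bounded_weighted_sum_le (Z : 'M[R]_m) (e : 'I_m -> R) (p : 'I_m -> 'I_m -> R) (z : R) :
  (forall a b, `|Z a b| <= z) -> (forall a, `|e a| <= 1) -> (forall a b, 0 <= p a b) ->
  \sum_a \sum_b Z a b * (e a * e b) * p a b <= z * \sum_a \sum_b p a b.
Proof.
move=> hZ e1 p0; rewrite mulr_sumr; apply: ler_sum => a _.
rewrite mulr_sumr; apply: ler_sum => b _.
apply: le_trans (ler_norm _) _; rewrite !normrM (ger0_norm (p0 a b)).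
apply: ler_wpM2r => //; rewrite -[X in _ <= X]mulr1 -[1]mulr1.
by rewrite ler_pM ?mulr_ge0 ?normr_ge0 // ler_pM ?normr_ge0.
Qed.

End SubmatrixBounds.

Section Indicators.
Variables (R : rcfType) (n : nat) (S : {set 'I_n}).

Lemma sum_notin : \sum_i ((i \notin S)%:R : R) = #|~: S|%:R.
Proof.
rewrite -sumr_const [RHS]big_mkcond /=; apply: eq_bigr => i _.
by rewrite in_setC; case: (i \in S).
Qed.

Lemma indicator_setC_outer :
  \matrix_(i, j) ((i \notin S) && (j \notin S))%:R =
  (\col_i (i \notin S)%:R) *m (\col_i (i \notin S)%:R)^T :> 'M[R]_n.
Proof. by apply/matrixP => i j; rewrite !mxE big_ord1 !mxE -natrM mulnb. Qed.

Lemma pseudorect_indicator_setC (theta : R) :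
  0 <= theta -> #|~: S|%:R <= theta * n%:R ->
  pseudorect theta (\matrix_(i, j) ((i \notin S) && (j \notin S))%:R).
Proof.
move=> theta0 cardC_le; have c0 : (0 : R) <= #|~: S|%:R by rewrite ler0n.
split.
- by move=> i j; rewrite mxE ler0n lern1 leq_b1.
- have -> : \sum_i \sum_j `|(\matrix_(i, j) ((i \notin S) && (j \notin S))%:R : 'M[R]_n) i j|
      = (\sum_i ((i \notin S)%:R : R)) * \sum_j ((j \notin S)%:R : R).
    rewrite mulr_suml; apply: eq_bigr => i _; rewrite mulr_sumr; apply: eq_bigr => j _.
    by rewrite mxE ger0_norm ?ler0n // -natrM mulnb.
  by rewrite sum_notin -exprMn expr2 ler_pM.
- rewrite indicator_setC_outer.
  apply: tracenorm_le_trans (tracenorm_outer _) (le_trans _ cardC_le).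
  rewrite mxE -sum_notin; apply: ler_sum => i _.
  by rewrite !mxE -natrM mulnb andbb lexx.
Qed.

Lemma frob_mask_subSxS (X M : 'M[R]_n) :
  frob (hadamard X (\matrix_(i, j) ((i \in S) && (j \in S))%:R)) M =
  frob (subSxS S X) (subSxS S M).
Proof.
rewrite /frob; transitivity (\sum_(i in S) \sum_(j in S) X i j * M i j).
  rewrite [RHS]big_mkcond; apply: eq_bigr => i _.
  case: (boolP (i \in S)) => iS; last first.
    by rewrite big1 // => j _; rewrite !mxE (negbTE iS) mulr0 mul0r.
  rewrite [RHS]big_mkcond; apply: eq_bigr => j _; rewrite !mxE iS /=.
  by case: (j \in S); rewrite ?mulr1 ?mulr0 ?mul0r.
rewrite big_enum_val; apply: eq_bigr => a _.
by rewrite big_enum_val; apply: eq_bigr => b _; rewrite !mxE.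
Qed.

Lemma sum_mul_notin_compl (x : 'I_n -> R) :
  \sum_i x i * (1 - (i \notin S)%:R) = \sum_(a < #|S|) x (enum_val a).
Proof.
rewrite -big_enum_val /= [RHS]big_mkcond /=; apply: eq_bigr => i _.
by case: (i \in S); rewrite /= ?subr0 ?mulr1 ?subrr ?mulr0.
Qed.

End Indicators.

Lemma zeta_le_of_const_test (R : realFieldType) (t K d zeta theta m n : R) :
  t * 1000 * 1000 = 1 -> 0 < zeta < 1 -> 0 <= theta <= zeta -> 10000 <= K ->
  0 < d -> 0 < m <= n -> (1 - theta) * n <= m ->
  10 * d * K ^+ 3 * (t * m) - theta * d * K * m <=
    t * (K * d * m + m * m * (K * d / (zeta * n))) ->
  zeta * n <= t * m.
Proof.
move=> t6 /andP[z0 z1] /andP[th0 thz] K4 d0 /andP[m0 mn] mge test.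
have n0 : 0 < n by apply: lt_le_trans mn.
have Kdm0 : 0 < K * d * m by rewrite !mulr_gt0 // (lt_le_trans _ K4).
have m_div : m * m * (K * d / (zeta * n)) <= K * d * m / zeta.
  have -> : m * m * (K * d / (zeta * n)) = K * d * m / zeta * (m / n).
    by field; rewrite !gt_eqF.
  apply: ler_piMr; first exact: ltW (divr_gt0 Kdm0 z0).
  by rewrite ler_pdivrMr // mul1r.
(* dividing [test] by [K d m] leaves [10 K^2 t - theta <= t (1 + 1/zeta)] *)
have scaled : K * d * m * (zeta * (10 * K ^+ 2 * t - theta)) <= K * d * m * (t * (zeta + 1)).
  have -> : K * d * m * (zeta * (10 * K ^+ 2 * t - theta))
      = zeta * (10 * d * K ^+ 3 * (t * m) - theta * d * K * m) by ring.
  have -> : K * d * m * (t * (zeta + 1)) = zeta * (t * (K * d * m + K * d * m / zeta)).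
    by field; rewrite gt_eqF.
  apply: ler_wpM2l; first exact: ltW.
  by apply: le_trans test _; apply: ler_wpM2l; [nra | rewrite lerD2l].
rewrite ler_pM2l // in scaled.
have K2t : 1000 <= 10 * K ^+ 2 * t by nra.
have small : zeta <= t * (1 - zeta) by nra.
apply: le_trans (_ : _ <= t * (1 - zeta) * n) _; first by apply: ler_wpM2r; first exact: ltW.
rewrite -mulrA; apply: ler_wpM2l; first nra.
by apply: le_trans mge; apply: ler_wpM2r; [exact: ltW | lra].
Qed.

Section Feasibility.
Variables (R : rcfType) (n : nat) (Ahat F : 'M[R]_n) (ell : 'I_n -> R).
Variables (zeta d K theta : R) (S : {set 'I_n}) (Y Z : 'M[R]_#|S|).
Local Notation m := #|S|.
Local Notation G := (subSxS S (hadamard (Ahat - F) (outer ell))).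
Local Notation zbound := (K * d / (zeta * n%:R)).

Hypotheses (ell_le1 : forall i, `|ell i| <= 1) (zeta_gt0 : 0 < zeta) (zeta_lt1 : zeta < 1).
Hypotheses (d_gt0 : 0 < d) (K_ge : 10000 <= K) (theta_ge0 : 0 <= theta).
Hypotheses (theta_le : theta <= zeta) (card_S_ge : (1 - theta) * n%:R <= m%:R).
Hypotheses (AF_split : subSxS S (Ahat - F) = Y + Z) (Y_op : opnorm_le Y (K * d)).
Hypotheses (Z_entry : forall a b, `|Z a b| <= zbound).
Hypothesis G_res : resolvable G (10%:R * d * K ^+ 3) (theta * d * K).
Hypothesis F_nonneg : forall a b, 0 <= subSxS S (hadamard F (outer ell)) a b.

Let K_gt0 : 0 < K. Proof. exact: lt_le_trans K_ge. Qed.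
Let Kd_gt0 : 0 < K * d. Proof. exact: mulr_gt0. Qed.
Let ellS_le1 (a : 'I_m) : `|ell (enum_val a)| <= 1. Proof. exact: ell_le1. Qed.

Lemma card_setC_le : #|~: S|%:R <= theta * n%:R :> R.
Proof.
have n_split : n%:R = #|~: S|%:R + m%:R :> R by rewrite -natrD addnC cardsC card_ord.
have := card_S_ge; rewrite n_split; nra.
Qed.

Lemma card_S_le : m%:R <= n%:R :> R.
Proof. by rewrite ler_nat; have := max_card (mem S); rewrite card_ord. Qed.

Lemma G_entry a b : G a b = (Y a b + Z a b) * (ell (enum_val a) * ell (enum_val b)).
Proof.
by have := congr1 (fun A : 'M[R]_m => A a b) AF_split; rewrite !mxE => <-.
Qed.

Lemma sum_G_weighted (p : 'I_m -> 'I_m -> R) :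
  \sum_a \sum_b G a b * p a b =
  \sum_a \sum_b Y a b * (ell (enum_val a) * ell (enum_val b)) * p a b +
  \sum_a \sum_b Z a b * (ell (enum_val a) * ell (enum_val b)) * p a b.
Proof.
rewrite -big_split; apply: eq_bigr => a _; rewrite -big_split; apply: eq_bigr => b _.
by rewrite G_entry /= mulrDl mulrDl.
Qed.

Lemma sum_G_le : \sum_a \sum_b G a b <= K * d * m%:R + m%:R * m%:R * zbound.
Proof.
have := sum_G_weighted (fun _ _ => 1); under eq_bigr do under eq_bigr do rewrite mulr1.
move=> ->; apply: lerD.
  under eq_bigr do under eq_bigr do rewrite mulr1 mulrCA.
  under eq_bigr do rewrite -mulr_sumr.
  apply: le_trans (opnorm_bilinear_le _ _ Kd_gt0 Y_op) _.
  have sq_le a : ell (enum_val a) ^+ 2 <= 1.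
    by rewrite -real_normK ?num_real // expr_le1 ?normr_ge0.
  have : \sum_(a < m) ell (enum_val a) ^+ 2 <= \sum_(a < m) 1 by apply: ler_sum => a _.
  rewrite sumr_const card_ord -mulr_natl mulr1 => h.
  have half (x : R) : (x + x) / 2 = x by field.
  by rewrite -mulrA ler_pM2l // half.
apply: le_trans (entry_bounded_weighted_sum_le Z_entry ellS_le1 (fun _ _ => ler01)) _.
by rewrite !sumr_const !card_ord -mulrnA natrM mulrC.
Qed.

Lemma zeta_mul_n_le : zeta * n%:R <= 10^-1 ^+ 6 * m%:R.
Proof.
set t : R := 10^-1 ^+ 6.
have t6 : t * 1000 * 1000 = 1 by rewrite /t exprVn; field.
have t_gt0 : 0 < t by rewrite exprn_gt0 // invr_gt0 ltr0n.
have [m0|m_gt0] := posnP m.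
  have n0 : n%:R = 0 :> R.
    have theta_lt1 : 0 < 1 - theta by rewrite subr_gt0 (le_lt_trans theta_le).
    move: card_S_ge; rewrite m0 mulr0n -[X in _ <= X](mulr0 (1 - theta)) ler_pM2l // => n_le0.
    by apply/eqP; rewrite eq_le n_le0 ler0n.
  by rewrite n0 m0 !mulr0.
have t_le1 : t <= 1 by rewrite /t exprn_ile1 // ?invr_ge0 ?ler0n // invf_le1 ?ler1n ?ltr0n.
have x01 (a : 'I_m) : 0 <= t <= 1 by rewrite (ltW t_gt0) t_le1.
have sum_t : \sum_(a < m) t = t * m%:R by rewrite sumr_const card_ord mulr_natr.
have xsum : \sum_(a < m) t <= t * m%:R by rewrite sum_t.
have := @G_res (fun _ => t) x01 xsum.
rewrite sum_t frob_Yx; under eq_bigr do rewrite -mulr_suml; rewrite -mulr_suml => test.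
apply: zeta_le_of_const_test t6 _ _ K_ge d_gt0 _ card_S_ge _.
- by rewrite zeta_gt0 zeta_lt1.
- by rewrite theta_ge0 theta_le.
- by rewrite ltr0n m_gt0 card_S_le.
- apply: le_trans test _.
  by rewrite mulrC; apply: ler_wpM2l; [exact: ltW | exact: sum_G_le].
Qed.

Lemma sum_subSxS_le (N : 'M[R]_n) : (forall i j, 0 <= N i j) ->
  \sum_a \sum_b subSxS S N a b <= \sum_i \sum_j N i j.
Proof.
move=> N0; apply: le_trans (_ : _ <= \sum_a \sum_j N (enum_val a) j) _.
  apply: ler_sum => a _; under eq_bigr do rewrite mxE.
  exact: (sum_enum_val_le _ (fun j => N0 (enum_val a) j)).
by apply: (sum_enum_val_le S (f := fun i => \sum_j N i j)) => i; apply: sumr_ge0.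
Qed.

Lemma frob_G_pseudorect_le (rho : R) (N : 'M[R]_n) :
  0 <= rho <= zeta -> pseudorect (Num.sqrt (rho * (K * rho))) N ->
  frob G (subSxS S N) <= 2 * (K ^+ 2 * d * rho * n%:R).
Proof.
move=> /andP[rho0 rho_le] [N01 N_sum N_tr].
set tau := Num.sqrt _ in N_sum N_tr.
have Krho0 : 0 <= K * rho by rewrite mulr_ge0 // ltW.
have tau2 : tau ^+ 2 = rho * (K * rho) by rewrite /tau sqr_sqrtr // mulr_ge0.
have tau_le : tau <= K * rho.
  rewrite -ler_sqr ?nnegrE ?sqrtr_ge0 // tau2 expr2.
  by apply: ler_wpM2r => //; apply: ler_peMl => //; apply: le_trans _ K_ge; rewrite ler1n.
have n0 : (0 : R) <= n%:R by rewrite ler0n.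
have N0 i j : 0 <= N i j by case/andP: (N01 i j).
rewrite /frob sum_G_weighted mulr2n mulrDl mul1r; apply: lerD.
  apply: le_trans (subSxS_tracenorm_bilinear_le Kd_gt0 Y_op N_tr ellS_le1) _.
  rewrite [X in _ <= X](_ : _ = K * d * (K * rho * n%:R)); last by ring.
  by apply: ler_wpM2l; [exact: ltW Kd_gt0 | exact: ler_wpM2r].
apply: le_trans (entry_bounded_weighted_sum_le Z_entry ellS_le1 _) _.
  by move=> a b; rewrite mxE.
apply: le_trans (ler_wpM2l _ (le_trans (sum_subSxS_le N0) _)) _.
- exact: divr_ge0 (ltW Kd_gt0) (mulr_ge0 (ltW zeta_gt0) n0).
- by apply: le_trans N_sum; do 2!(apply: ler_sum => ? _); exact: ler_norm.
have [->|n_neq0] := eqVneq (n%:R : R) 0; first by rewrite expr0n !mulr0.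
have zeta_neq0 : zeta != 0 by rewrite gt_eqF.
rewrite tau2 [X in X <= _](_ : _ = K ^+ 2 * d * rho * n%:R * (rho / zeta)); last first.
  by field; rewrite zeta_neq0.
apply: ler_piMr; last by rewrite ler_pdivrMr // mul1r.
by rewrite !mulr_ge0 // ?exprn_ge0 ltW.
Qed.

Lemma boosting_constraint (rho : R) (M : 'M[R]_n) (x : 'I_n -> R) :
  theta / K <= rho <= zeta -> rowsel rho (K * rho) M x ->
  10%:R * d * K ^+ 2 * (K * (\sum_i x i * (1 - (i \notin S)%:R)) - rho * n%:R) <=
  frob (hadamard (hadamard Ahat (outer ell)) (\matrix_(i, j) ((i \in S) && (j \in S))%:R)) M.
Proof.
move=> /andP[rho_lo rho_hi] [M01 x01 x_sum [N [N_pr M_def]]]; rewrite M_def in M01 *.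
have rho0 : 0 <= rho by apply: le_trans rho_lo; rewrite divr_ge0 // ltW.
have theta_le_Krho : theta <= K * rho by move: rho_lo; rewrite ler_pdivrMr ?K_gt0 // mulrC.
rewrite frob_mask_subSxS sum_mul_notin_compl; pose xs (a : 'I_m) := x (enum_val a).
have T1 : 0 <= frob (subSxS S (hadamard F (outer ell))) (subSxS S (Yx x - N)).
  by apply: frob_ge0 => // a b; rewrite mxE; case/andP: (M01 (enum_val a) (enum_val b)).
have G_split : frob G (subSxS S (Yx x - N)) = frob G (Yx xs) - frob G (subSxS S N).
  by rewrite -frobBr; congr frob; apply/matrixP => a b; rewrite !mxE.
have AL_split : subSxS S (hadamard Ahat (outer ell)) = subSxS S (hadamard F (outer ell)) + G.
  by apply/matrixP => a b; rewrite !mxE; ring.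
have xs_small : \sum_a xs a <= 10^-1 ^+ 6 * m%:R.
  apply: le_trans zeta_mul_n_le; apply: le_trans (ler_wpM2r (ler0n _ n) rho_hi).
  by apply: le_trans x_sum; apply: sum_enum_val_le => i; case/andP: (x01 i).
have T2 := @G_res xs (fun a => x01 (enum_val a)) xs_small.
have rho_range : 0 <= rho <= zeta by rewrite rho0 rho_hi.
have T3 := frob_G_pseudorect_le rho_range N_pr.
rewrite AL_split frobDl G_split.
change (\sum_(a < m) x (enum_val a)) with (\sum_a xs a).
have theta_term : theta * d * K * m%:R <= K ^+ 2 * d * rho * n%:R.
  rewrite -(mulrA theta) [X in _ <= X](_ : _ = K * rho * (d * K) * n%:R); last by ring.
  have dK0 : 0 <= d * K by rewrite mulr_ge0 // ltW.
  apply: ler_pM; rewrite ?mulr_ge0 ?ler0n ?(ltW d_gt0) ?(ltW K_gt0) //; last exact: card_S_le.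
  by apply: ler_wpM2r.
move: T1 T2 T3 theta_term.
set P := K ^+ 2 * d * rho * n%:R; set sx := \sum_a xs a.
have -> : 10%:R * d * K ^+ 2 * (K * sx - rho * n%:R) = 10%:R * d * K ^+ 3 * sx - 10%:R * P.
  by rewrite /P; ring.
have : 0 <= P by rewrite /P !mulr_ge0 ?exprn_ge0 ?ler0n ?(ltW d_gt0) ?(ltW K_gt0).
lra.
Qed.

End Feasibility.

Theorem mainTheorem12 (R : rcfType) (n : nat) (Ahat : 'M[R]_n) (ell : 'I_n -> R)
    (zeta d K : R)
    (hell : forall i, ell i = 1 \/ ell i = -1)
    (hzeta : 0 < zeta < 1) (hd : 0 < d) (hK : 10%:R ^+ 4 <= K)
    (F : 'M[R]_n) (S : {set 'I_n}) (theta : R)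
    (htheta0 : 0 <= theta) (hthetaz : theta <= zeta)
    (hS : (1 - theta) * n%:R <= #|S|%:R)
    (h1 : forall i j, 0 <= subSxS S (hadamard F (outer ell)) i j)
    (h2 : exists Y Z : 'M[R]_#|S|,
        [/\ subSxS S (Ahat - F) = Y + Z, opnorm_le Y (K * d)
          & forall i j, `|Z i j| <= K * d / (zeta * n%:R)])
    (h3 : resolvable (subSxS S (hadamard (Ahat - F) (outer ell)))
            (10%:R * d * K ^+ 3) (theta * d * K)) :
  boosting_feasible Ahat ell zeta d K theta
    (fun i => (i \notin S)%:R)
    (\matrix_(i, j) ((i \in S) && (j \in S))%:R)
    (\matrix_(i, j) ((i \notin S) && (j \notin S))%:R).
Proof.
move: hzeta h2 => /andP[zeta_gt0 zeta_lt1] [Y [Z [AF_split Y_op Z_entry]]].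
have ell_le1 i : `|ell i| <= 1 by case: (hell i) => ->; rewrite ?normrN normr1.
have K_ge : 10000 <= K by move: hK; rewrite -natrX.
have cardC_le := card_setC_le hS.
split; first by rewrite htheta0 hthetaz.
split; first exact: pseudorect_indicator_setC.
split; first by move=> i; rewrite ler0n lern1 leq_b1.
split; first by rewrite sum_notin.
split; first by move=> i j; rewrite mxE ler0n.
split; first by move=> i j; rewrite !mxE; case: (i \in S); case: (j \in S); rewrite /=; ring.
move=> rho rho_range M x rowsel_Mx.
apply: (boosting_constraint ell_le1 zeta_gt0 zeta_lt1 hd K_ge htheta0 hthetaz hS
  AF_split Y_op Z_entry h3 h1 rho_range rowsel_Mx).
Qed.
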